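(* Let $\rho,\rho',\sigma$ be quantum states on a finite-dimensional Hilbert space such that $\rho$ and $\rho'$ both commute with $\sigma$ (but not necessarily with each other). Then there exists a unitary channel $\mathcal U$ such that (i) $[\rho,\mathcal U(\rho')]=0$, (ii) $D(\rho,\mathcal U(\rho'))\le D(\rho,\rho')$, and (iii) $\mathcal U(\rho')$ commutes with $\sigma$.
   Context: $D(\rho,\tau)=\frac12\|\rho-\tau\|_1$ is the trace distance; a unitary channel is a map $X\mapsto UXU^\dagger$ with $U$ unitary. *)

From HB Require Import structures.
From mathcomp Require Import all_boot all_order all_algebra.
Set Implicit Arguments. Unset Strict Implicit. Unset Printing Implicit Defensive.
Import Order.TTheory GRing.Theory Num.Theory.
Local Open Scope ring_scope.
Local Open Scope sesquilinear_scope.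

(* Quantum states on C^n, C an (abstract) numeric algebraically closed field,
   e.g. the complex numbers. Matrices act on row vectors (MathComp convention). *)

Definition adj (C : numClosedFieldType) m n (A : 'M[C]_(m, n)) : 'M[C]_(n, m) :=
  A ^t*.

Definition psd (C : numClosedFieldType) n (A : 'M[C]_n) : Prop :=
  adj A = A /\ forall v : 'rV[C]_n, 0 <= (v *m A *m adj v) 0 0.

Definition is_state (C : numClosedFieldType) n (rho : 'M[C]_n) : Prop :=
  psd rho /\ \tr rho = 1.

Definition commute_mx (C : numClosedFieldType) n (A B : 'M[C]_n) : Prop :=
  A *m B = B *m A.

Definition unitary_channel (C : numClosedFieldType) n (U : 'M[C]_n)
  (X : 'M[C]_n) : 'M[C]_n := U *m X *m adj U.

(* trace norm ||A||_1 = tr sqrt(A^dagger A) = sum of singular values, where the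
   eigenvalues of the (normal, PSD) matrix A^dagger A are given by the spectral
   decomposition of MathComp's spectral.v *)
Definition trace_norm (C : numClosedFieldType) n (A : 'M[C]_n) : C :=
  \sum_(i < n) sqrtC (spectral_diag (adj A *m A) 0 i).

Definition trace_dist (C : numClosedFieldType) n (rho tau : 'M[C]_n) : C :=
  2^-1 * trace_norm (rho - tau).

From HB Require Import structures.
From mathcomp Require Import all_boot all_order all_algebra all_fingroup.
From mathcomp Require Import ring.
Set Implicit Arguments. Unset Strict Implicit. Unset Printing Implicit Defensive.
Import Order.TTheory GRing.Theory Num.Theory Num.Def.
Local Open Scope ring_scope.
Local Open Scope sesquilinear_scope.

(* Diagonalise rho and sigma in a common orthonormal basis, and rho' and sigma
   in another.  For K large, sorting each basis by decreasing eigenvalues of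
   rho + K sigma (resp. rho' + K sigma) also sorts it by decreasing eigenvalues
   of sigma, so sigma gets the same sorted spectrum in both bases.  The unitary U
   sending the second sorted basis to the first therefore fixes sigma, and
   U rho' U^* is diagonal in the first basis, hence commutes with rho and sigma.
   Finally ||rho - U rho' U^*||_1 = sum_i |lambda_i(rho + K sigma) -
   lambda_i(rho' + K sigma)| <= ||rho - rho'||_1 by Mirsky's inequality, itself a
   consequence of Weyl's monotonicity theorem. *)

Lemma char_poly_conj (R : comUnitRingType) n (P A : 'M[R]_n) :
  P \in unitmx -> char_poly (invmx P *m A *m P) = char_poly A.
Proof.
move=> Pu; pose f := @map_mx R {poly R} polyC n n.
have fVK : f (invmx P) *m f P = 1%:M by rewrite -map_mxM mulVmx ?map_mx1.
have fKV : f P *m f (invmx P) = 1%:M by rewrite -map_mxM mulmxV ?map_mx1.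
rewrite /char_poly.
have -> : char_poly_mx (invmx P *m A *m P) = f (invmx P) *m char_poly_mx A *m f P.
  rewrite /char_poly_mx mulmxBr mulmxBl !map_mxM; congr (_ - _).
  by rewrite scalar_mxC -mulmxA fVK mulmx1.
by rewrite !det_mulmx mulrC mulrA -det_mulmx fKV det1 mul1r.
Qed.

Lemma sorting_perm n (r : rel 'I_n) : transitive r -> total r ->
  exists p : 'S_n, forall i j : 'I_n, (i <= j)%N -> r (p i) (p j).
Proof.
move=> r_trans r_total; have r_refl : reflexive r by move=> i; rewrite -[r i i]orbb.
have /tuple_permP[p Ep] : perm_eq (sort r (enum 'I_n)) (ord_tuple n).
  by rewrite perm_sort val_ord_tuple.
exists p => i j le_ij.
have nthE (k : 'I_n) : nth i (sort r (enum 'I_n)) k = p k.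
  by rewrite Ep nth_mktuple tnth_ord_tuple.
rewrite -!nthE; apply: sorted_leq_nth; rewrite ?inE ?size_sort ?size_enum_ord //.
exact: sort_sorted.
Qed.

Lemma exists_row_supp_le_image_supp_ge (F : fieldType) n (M : 'M[F]_n) (k : 'I_n) :
  exists2 c : 'rV[F]_n, c != 0 &
    (forall i : 'I_n, (k < i)%N -> c 0 i = 0) /\
    (forall j : 'I_n, (j < k)%N -> (c *m M) 0 j = 0).
Proof.
(* k + 1 unknowns (the entries of [c] on e_0..e_k) against k linear constraints. *)
pose E : 'M[F]_(k.+1, n) := \matrix_(i, j) ((i : nat) == j)%:R.
pose G : 'M[F]_(n, k) := \matrix_(i, j) ((i : nat) == j)%:R.
have ker_nz : kermx (E *m M *m G) != 0.
  rewrite -mxrank_eq0 mxrank_ker -lt0n subn_gt0.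
  exact: leq_ltn_trans (rank_leq_col _) _.
have [w /sub_kermxP wEMG w_nz] := rowV0Pn ker_nz.
have [l wl_nz] : exists l, w 0 l != 0.
  apply/existsP; apply: contraR w_nz => /existsPn wl0; apply/eqP/rowP => l.
  by rewrite mxE; apply/eqP; rewrite -[_ == 0]negbK wl0.
have sum_delta m (x : 'I_m -> F) (j : 'I_m) :
    \sum_(i < m) x i * ((i : nat) == j)%:R = x j.
  rewrite (bigD1 j) //= eqxx mulr1 big1 ?addr0 // => i /negbTE.
  by rewrite val_eqE => ->; rewrite mulr0.
exists (w *m E); last split.
- apply: contraNneq wl_nz => /rowP /(_ (widen_ord (ltn_ord k) l)); rewrite !mxE => <-.
  by under eq_bigr do rewrite mxE; rewrite sum_delta.
- move=> i lt_ki; rewrite !mxE big1 // => m _; rewrite mxE.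
  by rewrite (ltn_eqF (leq_ltn_trans (ltn_ord m : (m <= k)%N) lt_ki)) mulr0.
- move=> j lt_jk; have := congr1 (fun X : 'rV[F]_k => X 0 (Ordinal lt_jk)) wEMG.
  rewrite /= !mulmxA mxE [RHS]mxE; under eq_bigr do rewrite [G _ _]mxE.
  by rewrite (sum_delta _ _ j).
Qed.

Section UnitaryDiag.
Variable C : numClosedFieldType.

(* The rows of [Q] form an orthonormal eigenbasis, with eigenvalues [d]. *)
Definition unitary_diag n (Q : 'M[C]_n) (d : 'rV[C]_n) : 'M[C]_n :=
  Q^t* *m diag_mx d *m Q.

Lemma trmxC_mul m n p (A : 'M[C]_(m, n)) (B : 'M[C]_(n, p)) :
  (A *m B)^t* = B^t* *m A^t*.
Proof. by rewrite trmx_mul map_mxM. Qed.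

Lemma perm_mx_unitary n (p : 'S_n) : (perm_mx p : 'M[C]_n) \is unitarymx.
Proof.
by apply/unitarymxP; rewrite tr_perm_mx map_perm_mx -perm_mxM mulgV perm_mx1.
Qed.

Lemma trmxC_mulmx_unitary n (Q : 'M[C]_n) : Q \is unitarymx -> Q^t* *m Q = 1%:M.
Proof. by move=> QU; rewrite -[Q^t*]mul1mx mulmxKtV. Qed.

Variables (n : nat) (Q : 'M[C]_n).
Hypothesis QU : Q \is unitarymx.

Lemma unitary_diag_adj d : (unitary_diag Q d)^t* = unitary_diag Q (map_mx conjC d).
Proof. by rewrite /unitary_diag !trmxC_mul trmxCK tr_diag_mx map_diag_mx mulmxA. Qed.

Lemma unitary_diag_hermitian d :
  d \is a realmx -> (unitary_diag Q d)^t* = unitary_diag Q d.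
Proof. by move=> /realmxC dR; rewrite unitary_diag_adj dR. Qed.

Lemma unitary_diagD d e : unitary_diag Q (d + e) = unitary_diag Q d + unitary_diag Q e.
Proof. by rewrite /unitary_diag raddfD mulmxDr mulmxDl. Qed.

Lemma unitary_diagB d e : unitary_diag Q (d - e) = unitary_diag Q d - unitary_diag Q e.
Proof. by rewrite /unitary_diag raddfB mulmxBr mulmxBl. Qed.

Lemma unitary_diagZ a d : unitary_diag Q (a *: d) = a *: unitary_diag Q d.
Proof. by rewrite /unitary_diag linearZ /= -scalemxAr -scalemxAl. Qed.

Lemma unitary_diagM d e :
  unitary_diag Q d *m unitary_diag Q e = unitary_diag Q (\row_i (d 0 i * e 0 i)).
Proof.
rewrite /unitary_diag !mulmxA mulmxtVK // -mulmx_diag.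
by rewrite -[_ *m diag_mx e]mulmxA mulmxA.
Qed.

Lemma unitary_diag_comm d e :
  unitary_diag Q d *m unitary_diag Q e = unitary_diag Q e *m unitary_diag Q d.
Proof.
by rewrite !unitary_diagM; congr unitary_diag; apply/rowP => i; rewrite !mxE mulrC.
Qed.

Lemma mxtrace_unitary_diag d : \tr (unitary_diag Q d) = \sum_i d 0 i.
Proof. by rewrite mxtrace_mulC mulmxA (unitarymxP QU) mul1mx mxtrace_diag. Qed.

Lemma unitary_diag_perm (p : 'S_n) d :
  unitary_diag Q d = unitary_diag (perm_mx p *m Q) (col_perm p d).
Proof.
have Dp : diag_mx d = perm_mx p^-1 *m diag_mx (col_perm p d) *m perm_mx p.
  apply/matrixP => i j; rewrite -row_permE -[perm_mx p](congr1 perm_mx (invgK p)).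
  by rewrite -col_permE !mxE permKV (inj_eq perm_inj).
by rewrite /unitary_diag Dp trmxC_mul tr_perm_mx map_perm_mx !mulmxA.
Qed.

Lemma char_poly_unitary_diag d :
  char_poly (unitary_diag Q d) = \prod_i ('X - (d 0 i)%:P).
Proof.
rewrite /unitary_diag -invmx_unitary // char_poly_conj ?unitarymx_unit //.
by rewrite char_poly_trig ?diag_mx_is_trig //; apply: eq_bigr => i _; rewrite mxE eqxx.
Qed.

End UnitaryDiag.

Section Spectrum.
Variables (C : numClosedFieldType) (n : nat).
Implicit Types (P Q : 'M[C]_n) (d e : 'rV[C]_n).

Definition nonincreasing_row d := forall i j : 'I_n, (i <= j)%N -> d 0 j <= d 0 i.

Lemma unitary_diag_perm_eq P Q d e : P \is unitarymx -> Q \is unitarymx ->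
  unitary_diag P d = unitary_diag Q e ->
  perm_eq [seq d 0 i | i <- enum 'I_n] [seq e 0 i | i <- enum 'I_n].
Proof.
move=> PU QU PdQe; apply: prod_XsubC_eq; rewrite !big_map.
by rewrite -(char_poly_unitary_diag PU) PdQe char_poly_unitary_diag.
Qed.

Lemma unitary_diag_inj_sorted P Q d e : P \is unitarymx -> Q \is unitarymx ->
  nonincreasing_row d -> nonincreasing_row e ->
  unitary_diag P d = unitary_diag Q e -> d = e.
Proof.
move=> PU QU d_sorted e_sorted PdQe.
have ge_trans : transitive (fun x y : C => y <= x).
  by move=> y x z xy yz; apply: le_trans yz xy.
have ge_anti : antisymmetric (fun x y : C => y <= x).
  by move=> x y /andP[xy yx]; apply/le_anti/andP.
have sorted_row f : nonincreasing_row f ->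
    sorted (fun x y => y <= x) [seq f 0 i | i <- enum 'I_n].
  move=> f_sorted; rewrite sorted_map.
  by have := iota_sorted 0 n; rewrite -val_enum_ord sorted_map; apply: sub_sorted.
have := sorted_eq ge_trans ge_anti (sorted_row d d_sorted) (sorted_row e e_sorted).
move=> /(_ (unitary_diag_perm_eq PU QU PdQe)) de; apply/rowP => i.
have nth_row f : nth 0 [seq f 0 j | j <- enum 'I_n] i = f 0 i.
  by rewrite (nth_map i) ?nth_ord_enum ?size_enum_ord.
by rewrite -nth_row de nth_row.
Qed.

Lemma trace_norm_unitary_diag Q d : Q \is unitarymx ->
  trace_norm (unitary_diag Q d) = \sum_i `|d 0 i|.
Proof.
move=> QU; rewrite /trace_norm /adj unitary_diag_adj unitary_diagM //.
set M := unitary_diag Q _.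
have M_normal : M \is normalmx.
  by apply/normalmxP; rewrite /M !unitary_diag_adj // unitary_diag_comm.
have /orthomx_spectralP := M_normal.
rewrite invmx_unitary ?spectral_unitarymx // -/(unitary_diag _ _) => Mspec.
have := unitary_diag_perm_eq (spectral_unitarymx M) QU (esym Mspec).
move=> /(perm_big _ (op := +%R) (x := 0) (P := xpredT) (F := sqrtC)).
rewrite !big_map => ->.
by apply: eq_bigr => i _; rewrite !mxE mulrC -normCK sqrCK.
Qed.

End Spectrum.

Section JointDiag.
Variables (C : numClosedFieldType) (n : nat).
Implicit Types (A S X : 'M[C]_n) (d r s : 'rV[C]_n).

Lemma hermitian_trig_mx_diag X : X^t* = X -> is_trig_mx X ->
  X = diag_mx (\row_i X i i) /\ \row_i X i i \is a realmx.
Proof.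
move=> XH /is_trig_mxP Xtrig; have /matrixP XHE := XH.
split; last first.
  by apply/mxOverP => k i; rewrite mxE; apply/CrealP; have := XHE i i; rewrite !mxE.
apply/matrixP => i j; rewrite !mxE.
have [->|ne_ij] := eqVneq i j; first by rewrite mulr1n.
rewrite mulr0n; have [lt_ij|] := ltnP i j; first by rewrite Xtrig.
rewrite leq_eqVlt eq_sym (negbTE (ne_ij : (i : nat) != j)) /= => lt_ji.
by have := XHE i j; rewrite !mxE Xtrig // conjC0 => <-.
Qed.

Lemma commuting_hermitian_joint_diag A S :
  A^t* = A -> S^t* = S -> A *m S = S *m A ->
  exists Q a s, [/\ Q \is unitarymx, a \is a realmx, s \is a realmx,
                    A = unitary_diag Q a & S = unitary_diag Q s].
Proof.
move=> AH SH AS; have [P PU /andP[trigA trigS]] := cotrigonalization2 AS.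
rewrite /similar_to !conjymx // in trigA trigS.
have conj_hermitian X : X^t* = X -> (P *m X *m P^t*)^t* = P *m X *m P^t*.
  by move=> XH; rewrite !trmxC_mul trmxCK XH mulmxA.
have unconj X : X = P^t* *m (P *m X *m P^t*) *m P.
  by rewrite !mulmxA trmxC_mulmx_unitary // mul1mx mulmxKtV.
have [EA RA] := hermitian_trig_mx_diag (conj_hermitian _ AH) trigA.
have [ES RS] := hermitian_trig_mx_diag (conj_hermitian _ SH) trigS.
exists P, (\row_i (P *m A *m P^t*) i i), (\row_i (P *m S *m P^t*) i i); split => //.
  by rewrite /unitary_diag -EA -unconj.
by rewrite /unitary_diag -ES -unconj.
Qed.

Lemma exists_sorting_perm d : d \is a realmx ->
  exists p : 'S_n, nonincreasing_row (col_perm p d).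
Proof.
move=> /mxOverP dR.
have ge_trans : transitive (fun i j : 'I_n => d 0 j <= d 0 i).
  by move=> j i k ji kj; apply: le_trans kj ji.
have ge_total : total (fun i j : 'I_n => d 0 j <= d 0 i).
  by move=> i j; apply: real_leVge.
have [p p_sorted] := sorting_perm ge_trans ge_total.
by exists p => i j le_ij; rewrite !mxE; apply: p_sorted.
Qed.

Lemma hermitian_sorted_diag X : X^t* = X ->
  exists Q c, [/\ Q \is unitarymx, c \is a realmx, nonincreasing_row c
                  & X = unitary_diag Q c].
Proof.
move=> XH.
have [Q [c [_ [QU cR _ XE _]]]] := commuting_hermitian_joint_diag XH XH erefl.
have [p c_sorted] := exists_sorting_perm cR.
exists (perm_mx p *m Q), (col_perm p c); split => //.
- by rewrite mul_unitarymx ?perm_mx_unitary.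
- by apply/mxOverP => k i; rewrite mxE; apply: (mxOverP cR).
- by rewrite XE (unitary_diag_perm _ p).
Qed.

Lemma large_weight_refines_order r s : r \is a realmx -> s \is a realmx ->
  exists2 K0, 0 <= K0 & forall K, K0 <= K ->
    forall i j, s 0 j < s 0 i -> r 0 j + K * s 0 j < r 0 i + K * s 0 i.
Proof.
move=> /mxOverP rR /mxOverP sR.
pose T i j := if s 0 j < s 0 i then (`|r 0 i| + `|r 0 j| + 1) / (s 0 i - s 0 j) else 0.
have T_ge0 i j : 0 <= T i j.
  rewrite /T; case: ifP => // lt_ji; rewrite divr_ge0 ?subr_ge0 ?ltW //.
  by rewrite ltr_wpDl ?addr_ge0 ?ltr01.
exists (\sum_i \sum_j T i j); first by do 2!(apply: sumr_ge0 => ? _).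
move=> K le_K i j lt_ji; rewrite -subr_gt0.
have T_le_K : T i j <= K.
  apply: le_trans le_K; rewrite (bigD1 i) //= (bigD1 j) //= -addrA lerDl.
  by rewrite addr_ge0 ?sumr_ge0 // => k _; apply: sumr_ge0.
have gap_gt0 : 0 < s 0 i - s 0 j by rewrite subr_gt0.
have : r 0 j - r 0 i < T i j * (s 0 i - s 0 j).
  rewrite /T lt_ji divfK ?lt0r_neq0 //.
  apply: (@le_lt_trans _ _ (`|r 0 i| + `|r 0 j|)); last by rewrite ltrDl.
  apply: le_trans (real_ler_norm (rpredB (rR 0 j) (rR 0 i))) _.
  by rewrite [leRHS]addrC ler_normB.
move=> /lt_le_trans /(_ (ler_wpM2r (ltW gap_gt0) T_le_K)).
by rewrite -subr_gt0; congr (0 < _); ring.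
Qed.

Lemma sorted_joint_diag A S : A^t* = A -> S^t* = S -> A *m S = S *m A ->
  exists2 K0, 0 <= K0 & forall K, K0 <= K -> exists Q a s,
    [/\ Q \is unitarymx, A = unitary_diag Q a, S = unitary_diag Q s,
        nonincreasing_row s
      & a + K *: s \is a realmx /\ nonincreasing_row (a + K *: s)].
Proof.
move=> AH SH AS.
have [Q [a [s [QU aR sR -> ->]]]] := commuting_hermitian_joint_diag AH SH AS.
have [K0 K0_ge0 K0_sep] := large_weight_refines_order aR sR.
exists K0 => // K le_K.
have KR : K \is Num.real by apply/ger0_real/(le_trans K0_ge0).
have wR : a + K *: s \is a realmx by rewrite realmxD // mxOverZ.
have [p w_sorted] := exists_sorting_perm wR.
exists (perm_mx p *m Q), (col_perm p a), (col_perm p s).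
rewrite -!unitary_diag_perm -linearZ -linearD; split => //.
- by rewrite mul_unitarymx ?perm_mx_unitary.
- move=> i j le_ij; have /mxOverP aiR := aR; have /mxOverP siR := sR.
  rewrite !mxE real_leNgt ?siR //; apply/negP => /(K0_sep K le_K) lt_w.
  have := w_sorted i j le_ij.
  by rewrite !mxE real_leNgt ?rpredD ?rpredM ?aiR ?siR ?lt_w.
- split => //; apply/mxOverP => k i; rewrite mxE; exact: (mxOverP wR).
Qed.

End JointDiag.

Section Mirsky.
Variables (C : numClosedFieldType) (n : nat).
Implicit Types (P Q : 'M[C]_n) (d x y : 'rV[C]_n).

Lemma quad_unitary_diag Q d (v : 'rV[C]_n) :
  (v *m unitary_diag Q d *m v^t*) 0 0 = \sum_i d 0 i * `|(v *m Q^t*) 0 i| ^+ 2.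
Proof.
have -> : v *m unitary_diag Q d *m v^t* = v *m Q^t* *m diag_mx d *m (v *m Q^t*)^t*.
  by rewrite trmxC_mul trmxCK !mulmxA.
rewrite mxE.
by apply: eq_bigr => i _; rewrite mul_mx_diag !mxE normCK mulrAC [LHS]mulrC.
Qed.

Lemma psd_unitary_diag Q d : (forall i, 0 <= d 0 i) -> psd (unitary_diag Q d).
Proof.
move=> d_ge0; split.
  by apply: unitary_diag_hermitian; apply/mxOverP => k i; rewrite ord1 ger0_real.
by move=> v; rewrite quad_unitary_diag sumr_ge0 // => i _; rewrite mulr_ge0 ?exprn_ge0.
Qed.

Lemma weyl_monotonicity P Q x y : P \is unitarymx -> Q \is unitarymx ->
  nonincreasing_row x -> nonincreasing_row y ->
  psd (unitary_diag Q y - unitary_diag P x) -> forall k, x 0 k <= y 0 k.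
Proof.
move=> PU QU x_sorted y_sorted [_ xy_quad] k.
have [c c_nz [c_low cPQ_high]] := exists_row_supp_le_image_supp_ge (P *m Q^t*) k.
pose w := c *m (P *m Q^t*).
have norm2E u : (u *m u^t*) 0 0 = \sum_i `|u 0 i| ^+ 2.
  by rewrite mxE; apply: eq_bigr => i _; rewrite !mxE normCK.
have c_gt0 : 0 < \sum_i `|c 0 i| ^+ 2 by rewrite -norm2E -dotmxE dotmx_is_dotmx.
have w_c : \sum_i `|w 0 i| ^+ 2 = \sum_i `|c 0 i| ^+ 2.
  by rewrite -!norm2E trmxC_mul mulmxA mulmxtVK // mul_unitarymx ?trmxC_unitary.
rewrite -(ler_pM2r c_gt0) -[in leRHS]w_c !mulr_sumr.
apply: le_trans (_ : \sum_i x 0 i * `|c 0 i| ^+ 2 <= _).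
  apply: ler_sum => i _; have [lt_ki|le_ik] := ltnP k i.
    by rewrite c_low // normr0 expr0n !mulr0.
  by rewrite ler_wpM2r ?exprn_ge0 ?x_sorted.
apply: le_trans (_ : \sum_i y 0 i * `|w 0 i| ^+ 2 <= _).
  have := xy_quad (c *m P); rewrite /adj mulmxBr mulmxBl.
  rewrite [X in 0 <= X]mxE [X in 0 <= _ + X]mxE subr_ge0 !quad_unitary_diag.
  by rewrite mulmxtVK // /w mulmxA.
apply: ler_sum => i _; have [lt_ik|le_ki] := ltnP i k.
  by rewrite /w cPQ_high // normr0 expr0n !mulr0.
by rewrite ler_wpM2r ?exprn_ge0 ?y_sorted.
Qed.

Lemma mirsky_trace_norm P Q a b : P \is unitarymx -> Q \is unitarymx ->
  a \is a realmx -> b \is a realmx -> nonincreasing_row a -> nonincreasing_row b ->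
  \sum_i `|(a - b) 0 i| <= trace_norm (unitary_diag P a - unitary_diag Q b).
Proof.
move=> PU QU aR bR a_sorted b_sorted.
set A := unitary_diag P a; set B := unitary_diag Q b.
have AB_herm : (A - B)^t* = A - B.
  by rewrite linearB /= map_mxB /= !unitary_diag_hermitian.
have [R [h [RU hR _ ABE]]] := hermitian_sorted_diag AB_herm.
have /mxOverP hiR := hR.
pose hpos := \row_i ((`|h 0 i| + h 0 i) / 2%:R).
have hpos_ge0 i : 0 <= hpos 0 i.
  rewrite mxE divr_ge0 // -[X in 0 <= _ + X]opprK subr_ge0.
  by rewrite -normrN real_ler_norm ?rpredN.
have hneg_ge0 i : 0 <= (hpos - h) 0 i.
  rewrite !mxE [leRHS](_ : _ = (`|h 0 i| - h 0 i) / 2%:R); last by field.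
  by rewrite divr_ge0 ?subr_ge0 ?real_ler_norm.
(* [Cm = B + (A - B)_+ = A + (A - B)_-] dominates [A] and [B], and
   [tr (Cm - A) + tr (Cm - B) = ||A - B||_1]. *)
pose Cm := B + unitary_diag R hpos.
have CmB : Cm - B = unitary_diag R hpos by rewrite addrC addKr.
have CmA : Cm - A = unitary_diag R (hpos - h).
  by rewrite unitary_diagB -ABE opprB addrA /Cm (addrC B).
have Cm_herm : Cm^t* = Cm.
  rewrite /Cm linearD /= map_mxD /= !unitary_diag_hermitian //.
  by apply/mxOverP => k i; rewrite ord1 ger0_real.
have [Qc [c [QcU _ c_sorted CmE]]] := hermitian_sorted_diag Cm_herm.
have le_ac : forall i, a 0 i <= c 0 i.
  apply: weyl_monotonicity PU QcU a_sorted c_sorted _.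
  by rewrite -CmE CmA; apply: psd_unitary_diag.
have le_bc : forall i, b 0 i <= c 0 i.
  apply: weyl_monotonicity QU QcU b_sorted c_sorted _.
  by rewrite -CmE CmB; apply: psd_unitary_diag.
apply: le_trans (_ : \sum_i ((c 0 i - a 0 i) + (c 0 i - b 0 i)) <= _).
  apply: ler_sum => i _; rewrite !mxE.
  rewrite (_ : a 0 i - b 0 i = (c 0 i - b 0 i) - (c 0 i - a 0 i)); last by ring.
  by rewrite (le_trans (ler_normB _ _)) // !ger0_norm ?subr_ge0 // addrC.
rewrite big_split /= !sumrB -(mxtrace_unitary_diag QcU) -(mxtrace_unitary_diag PU).
rewrite -(mxtrace_unitary_diag QU) -CmE -!linearB /= CmA CmB.
rewrite !mxtrace_unitary_diag // ABE trace_norm_unitary_diag // -big_split.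
by rewrite le_eqVlt; apply/predU1l/eq_bigr => i _ /=; rewrite !mxE; field.
Qed.

End Mirsky.

Unset Implicit Arguments.

Theorem lemma23 (C : numClosedFieldType) (n : nat) (rho rho' sigma : 'M[C]_n) :
  is_state rho -> is_state rho' -> is_state sigma ->
  commute_mx rho sigma -> commute_mx rho' sigma ->
  exists U : 'M[C]_n,
    U \is unitarymx /\
    commute_mx rho (unitary_channel U rho') /\
    trace_dist rho (unitary_channel U rho') <= trace_dist rho rho' /\
    commute_mx (unitary_channel U rho') sigma.
Proof.
move=> [[rhoH _] _] [[rho'H _] _] [[sigmaH _] _] rho_sigma rho'_sigma.
have [K1 K1_ge0 sort1] := sorted_joint_diag rhoH sigmaH rho_sigma.
have [K2 K2_ge0 sort2] := sorted_joint_diag rho'H sigmaH rho'_sigma.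
have le_K1 : K1 <= K1 + K2 by rewrite lerDl.
have le_K2 : K2 <= K1 + K2 by rewrite lerDr.
have [Q1 [r1 [s1 [Q1U rhoE sigmaE1 s1_sorted [w1R w1_sorted]]]]] := sort1 _ le_K1.
have [Q2 [r2 [s2 [Q2U rho'E sigmaE2 s2_sorted [w2R w2_sorted]]]]] := sort2 _ le_K2.
have s12 : s1 = s2.
  by apply: unitary_diag_inj_sorted Q1U Q2U s1_sorted s2_sorted _; rewrite -sigmaE1.
subst s2.
have channelE : unitary_channel (Q1^t* *m Q2) rho' = unitary_diag Q1 r2.
  by rewrite /unitary_channel /adj rho'E trmxC_mul trmxCK !mulmxA !mulmxtVK.
exists (Q1^t* *m Q2); rewrite channelE; split; [|split; [|split]].
- by rewrite mul_unitarymx ?trmxC_unitary.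
- by rewrite /commute_mx rhoE unitary_diag_comm.
- rewrite /trace_dist ler_wpM2l ?invr_ge0 ?ler0n // rhoE -unitary_diagB.
  rewrite trace_norm_unitary_diag //.
  have := mirsky_trace_norm Q1U Q2U w1R w2R w1_sorted w2_sorted.
  rewrite !unitary_diagD !unitary_diagZ -rho'E -sigmaE1 -sigmaE2.
  by rewrite (addrC r2) (addrC rho') !addrKA.
- by rewrite /commute_mx sigmaE1 unitary_diag_comm.
Qed.
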